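(* Let $(X,d)$ be a compact metric space, $\mathbb{F}=\{f_n:n\in\mathbb{N}\}$ a sequence of continuous surjective self-maps of $X$, and $k\in\mathbb{N}$. If $(X,\mathbb{F})$ is weakly mixing (resp. topologically mixing) then $(X,\mathbb{F}_k)$ is weakly mixing (resp. topologically mixing). If the family $\mathbb{F}$ is feeble open, then $(X,\mathbb{F}_k)$ weakly mixing (resp. topologically mixing) implies $(X,\mathbb{F})$ weakly mixing (resp. topologically mixing).
   Context: Write $\omega_n=f_n\circ\cdots\circ f_1$ and, for $n>k$, $\omega^k_n=f_n\circ\cdots\circ f_{k+1}$; $\mathbb{F}_k=\{f_n:n\ge k+1\}$ is the truncated family, whose $n$-th composition ($n>k$) is $\omega^k_n$. $(X,\mathbb{F})$ is weakly mixing if for any non-empty open $U_1,U_2,V_1,V_2\subseteq X$ there is $n\in\mathbb{N}$ with $\omega_n(U_i)\cap V_i\neq\emptyset$ for $i=1,2$. $(X,\mathbb{F})$ is topologically mixing if for every pair of non-empty open $U,V$ there is $K$ with $\omega_n(U)\cap V\neq\emptyset$ for all $n\ge K$. The same notions for $(X,\mathbb{F}_k)$ use $\omega^k_n$ in place of $\omega_n$. $\mathbb{F}$ is feeble open if for every non-empty open $U$ and every $f\in\mathbb{F}$, $f(U)$ has non-empty interior. *)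

From HB Require Import structures.
From mathcomp Require Import all_boot all_order all_algebra.
From mathcomp Require Import all_classical all_reals all_analysis.
Set Implicit Arguments. Unset Strict Implicit. Unset Printing Implicit Defensive.
Import Order.TTheory GRing.Theory Num.Theory.
Local Open Scope classical_set_scope.

(* The family F = {f_n : n >= 1} is given by f : nat -> X -> X; f 0 is unused. *)

(* omega f k n = f_n o ... o f_(k+1) for n > k (identity when n <= k).
   In particular omega f 0 n = omega_n = f_n o ... o f_1. *)
Fixpoint omega {X : Type} (f : nat -> X -> X) (k n : nat) : X -> X :=
  match n with
  | 0 => id
  | m.+1 => if (k <= m)%N then f m.+1 \o omega f k m else id
  end.

Definition weakly_mixing_k {T : topologicalType} (f : nat -> T -> T) (k : nat) :=
  forall U1 U2 V1 V2 : set T,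
    open U1 -> open U2 -> open V1 -> open V2 ->
    U1 !=set0 -> U2 !=set0 -> V1 !=set0 -> V2 !=set0 ->
    exists n : nat, (k < n)%N /\
      (omega f k n @` U1 `&` V1 !=set0) /\ (omega f k n @` U2 `&` V2 !=set0).

Definition top_mixing_k {T : topologicalType} (f : nat -> T -> T) (k : nat) :=
  forall U V : set T, open U -> open V -> U !=set0 -> V !=set0 ->
    exists K : nat, forall n : nat, (K <= n)%N -> (k < n)%N ->
      omega f k n @` U `&` V !=set0.

Definition feeble_open {T : topologicalType} (f : nat -> T -> T) :=
  forall n : nat, (0 < n)%N -> forall U : set T, open U -> U !=set0 ->
    (interior (f n @` U)) !=set0.

From HB Require Import structures.
From mathcomp Require Import all_boot all_order all_algebra.
From mathcomp Require Import all_classical all_reals all_analysis.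
Local Open Scope classical_set_scope.

(* Since omega_n = omega^k_n o omega_k, mixing of F for the pulled-back sets
   omega_k^-1(U) (open by continuity, non-empty by surjectivity) is mixing of
   F_k for U.  This gives F => F_k, except that weak mixing of F must be forced
   to hit a time n > k: first shrink U and V to open sets with omega_n(U)
   disjoint from V for all n <= k, one point separation at a time, using that
   a Hausdorff weakly mixing space with two points has no isolated point.
   Conversely, feeble openness gives omega_k(U) a non-empty interior W, and
   mixing of F_k for W is mixing of F for U. *)

Section Compositions.
Context {T : Type} (f : nat -> T -> T).

Lemma omega_id k : omega f k k = id.
Proof. by case: k => //= k; rewrite ltnn. Qed.

Lemma omega_comp i j n : (i <= j <= n)%N ->
  omega f i n = omega f j n \o omega f i j.
Proof.
elim: n => [|n IHn] /andP[ij jn].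
  by move: jn ij; rewrite leqn0 => /eqP-> /[!leqn0] /eqP->.
have [->|jn'] := eqVneq j n.+1; first by rewrite omega_id.
have {}jn : (j <= n)%N by rewrite -ltnS ltn_neqAle jn' jn.
by rewrite /= (leq_trans ij jn) jn (IHn _) ?ij.
Qed.

Lemma image_omega_image k n (A : set T) : (k <= n)%N ->
  omega f k n @` (omega f 0 k @` A) = omega f 0 n @` A.
Proof. by move=> kn; rewrite image_comp -omega_comp ?kn. Qed.

Lemma image_omega_preimage k n (A : set T) : (k <= n)%N ->
  omega f 0 n @` (omega f 0 k @^-1` A) `<=` omega f k n @` A.
Proof.
move=> kn; rewrite -(image_omega_image _ _ _ kn).
apply: image_subset; exact: image_preimage_subset.
Qed.

Hypothesis f_surj : forall n, (0 < n)%N -> forall y, exists x, f n x = y.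

Lemma omega_surj k n y : exists x, omega f k n x = y.
Proof.
elim: n y => [|n IHn] y /=; first by exists y.
case: ifP => _; last by exists y.
have [z <-] := f_surj n.+1 isT y.
by have [x <-] := IHn z; exists x.
Qed.

Lemma omega_preimage_neq0 k n (A : set T) :
  A !=set0 -> omega f k n @^-1` A !=set0.
Proof.
by case=> y Ay; have [x xy] := omega_surj k n y; exists x; rewrite /= xy.
Qed.

End Compositions.

Section Separation.
Context {T : topologicalType}.
Hypothesis hT : hausdorff_space T.

Lemma weakly_mixing_open_set1 (f : nat -> T -> T) k (p : T) :
  weakly_mixing_k f k -> open [set p] -> forall q, q = p.
Proof.
move=> wm op q; apply: contrapT => qp.
have oB : open (~` [set p]).
  by rewrite openC; exact/accessible_closed_set1/hausdorff_accessible.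
have p0 : [set p] !=set0 by exists p.
have [n [_ [[_ [[_ -> <-] fixp]] [_ [[_ -> <-] not_fixp]]]]] :=
  wm _ _ _ _ op op op oB p0 p0 p0 (ex_intro _ q qp).
exact: not_fixp fixp.
Qed.

Lemma open_separate_image (g : T -> T) (U V : set T) :
  (forall p : T, ~ open [set p]) -> continuous g ->
  open U -> open V -> U !=set0 -> V !=set0 ->
  exists U' V' : set T, [/\ open U' /\ open V', U' !=set0 /\ V' !=set0,
    U' `<=` U /\ V' `<=` V & g @` U' `&` V' = set0].
Proof.
move=> noiso gc oU oV [x Ux] [z Vz].
have /existsNP[y /not_implyP[Vy ygx]] : ~ V `<=` [set g x].
  move=> Vgx; apply: (noiso (g x)); suff -> : [set g x] = V by [].
  by apply/seteqP; split => [_ ->|//]; rewrite -(Vgx z Vz).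
move: hT; rewrite open_hausdorff => /(_ (g x) y).
have /[swap]/[apply] : g x != y by apply/eqP => /esym.
move=> [[A B]] /= [/set_mem gxA /set_mem yB] [oA oB /eqP AB0].
exists (U `&` g @^-1` A), (V `&` B); split.
- by split; apply: openI => //; move/continuousP: gc; apply.
- by split; [exists x | exists y].
- by split; apply: subIsetl.
- apply/seteqP; split => // _ [[w [_ Agw] <-] [_ Bgw]].
  by rewrite -AB0; split.
Qed.

Lemma open_separate_images (g : nat -> T -> T) m (U V : set T) :
  (forall p : T, ~ open [set p]) -> (forall n, continuous (g n)) ->
  open U -> open V -> U !=set0 -> V !=set0 ->
  exists U' V' : set T, [/\ open U' /\ open V', U' !=set0 /\ V' !=set0,
    U' `<=` U /\ V' `<=` V & forall n, (n < m)%N -> g n @` U' `&` V' = set0].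
Proof.
move=> noiso gc oU oV U0 V0.
elim: m => [|m [U' [V' [[oU' oV'] [U'0 V'0] [U'U V'V] sep]]]].
  by exists U, V; do ?split.
have [U'' [V'' [oUV'' UV''0 [U''U' V''V'] sep_m]]] :=
  open_separate_image _ _ _ noiso (gc m) oU' oV' U'0 V'0.
exists U'', V''; split => //.
  by split; [exact: subset_trans U'U | exact: subset_trans V'V].
move=> n; rewrite ltnS leq_eqVlt => /predU1P[->//|nm].
exact: subsetI_eq0 (image_subset _ U''U') V''V' (sep n nm).
Qed.

End Separation.

Section Mixing.
Context {T : topologicalType} (f : nat -> T -> T).

Lemma interior_omega_image_neq0 i n (U : set T) : feeble_open f ->
  open U -> U !=set0 -> interior (omega f i n @` U) !=set0.
Proof.
move=> fo oU U0; elim: n => [|n IHn] /=.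
  by rewrite image_id; move/interior_id: oU => ->.
case: ifP => _; last by rewrite image_id; move/interior_id: oU => ->.
apply: subset_nonempty (fo n.+1 isT _ (open_interior _) IHn).
apply: interiorS; rewrite -image_comp.
apply: image_subset; exact: interior_subset.
Qed.

Lemma image_omega_interior k n (U : set T) : (k <= n)%N ->
  omega f k n @` interior (omega f 0 k @` U) `<=` omega f 0 n @` U.
Proof.
move=> kn; rewrite -(image_omega_image f _ _ U kn).
exact: image_subset (@interior_subset _ _).
Qed.

Lemma weakly_mixing_0_of_k k :
  feeble_open f -> weakly_mixing_k f k -> weakly_mixing_k f 0.
Proof.
move=> fo wm U1 U2 V1 V2 oU1 oU2 oV1 oV2 U10 U20 V10 V20.
have [n [kn [meet1 meet2]]] := wm _ _ V1 V2
  (open_interior _) (open_interior _) oV1 oV2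
  (interior_omega_image_neq0 0 k _ fo oU1 U10)
  (interior_omega_image_neq0 0 k _ fo oU2 U20) V10 V20.
exists n; split; first exact: leq_trans (ltn0Sn k) kn.
have sub U := image_omega_interior _ _ U (ltnW kn).
split; first exact: subsetI_neq0 (sub _) (@subset_refl _ _) meet1.
exact: subsetI_neq0 (sub _) (@subset_refl _ _) meet2.
Qed.

Lemma top_mixing_0_of_k k :
  feeble_open f -> top_mixing_k f k -> top_mixing_k f 0.
Proof.
move=> fo tm U V oU oV U0 V0.
have [K meet] := tm _ V (open_interior _) oV
  (interior_omega_image_neq0 0 k _ fo oU U0) V0.
exists (maxn K k.+1) => n; rewrite geq_max => /andP[Kn kn] _.
exact: subsetI_neq0 (image_omega_interior _ _ _ (ltnW kn)) (@subset_refl _ _)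
  (meet n Kn kn).
Qed.

Lemma weakly_mixing_k_trivial k :
  (forall x y : T, x = y) -> weakly_mixing_k f k.
Proof.
move=> allT U1 U2 V1 V2 _ _ _ _ [x1 U1x1] [x2 U2x2] [y1 V1y1] [y2 V2y2].
exists k.+1; split => //; split.
  by exists y1; split => //; exists x1 => //; exact: allT.
by exists y2; split => //; exists x2 => //; exact: allT.
Qed.

Hypothesis f_cont : forall n, (0 < n)%N -> continuous (f n).

Lemma omega_continuous k n : continuous (omega f k n).
Proof.
elim: n => [|n IHn] x /=; first exact: cvg_id.
case: ifP => _; last exact: cvg_id.
by apply: continuous_comp; [exact: IHn | exact: f_cont].
Qed.

Lemma open_omega_preimage k n (A : set T) :
  open A -> open (omega f k n @^-1` A).
Proof. by move: (omega_continuous k n) => /continuousP; apply. Qed.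

Hypothesis f_surj : forall n, (0 < n)%N -> forall y, exists x, f n x = y.

Lemma top_mixing_k_of_0 k : top_mixing_k f 0 -> top_mixing_k f k.
Proof.
move=> tm U V oU oV U0 V0.
have [K meet] := tm _ V (open_omega_preimage 0 k _ oU) oV
  (omega_preimage_neq0 f f_surj 0 k _ U0) V0.
exists K => n Kn kn.
exact: subsetI_neq0 (image_omega_preimage f _ _ U (ltnW kn)) (@subset_refl _ _)
  (meet n Kn (leq_trans (ltn0Sn k) kn)).
Qed.

Lemma weakly_mixing_k_of_0 k : hausdorff_space T ->
  weakly_mixing_k f 0 -> weakly_mixing_k f k.
Proof.
move=> hT wm.
have [allT|] := pselect (forall x y : T, x = y).
  exact: weakly_mixing_k_trivial.
move=> /existsNP[p /existsNP[q pq]].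
have noiso (r : T) : ~ open [set r].
  move=> /(weakly_mixing_open_set1 hT _ _ _ wm) eqr.
  by apply: pq; rewrite (eqr p) (eqr q).
move=> U1 U2 V1 V2 oU1 oU2 oV1 oV2 U10 U20 V10 V20.
have [U' [V' [[oU' oV'] [U'0 V'0] [U'U1 V'V1] sep]]] :=
  open_separate_images hT _ k.+1 _ _ noiso (omega_continuous 0)
    (open_omega_preimage 0 k _ oU1) oV1
    (omega_preimage_neq0 f f_surj 0 k _ U10) V10.
have [n [_ [meet1 meet2]]] :=
  wm _ _ _ V2 oU' (open_omega_preimage 0 k _ oU2) oV' oV2
    U'0 (omega_preimage_neq0 f f_surj 0 k _ U20) V'0 V20.
have kn : (k < n)%N.
  by rewrite ltnNge -ltnS; apply: contraPN meet1 => /sep ->; case.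
exists n; split => //; split.
  apply: subsetI_neq0 _ V'V1 meet1.
  apply: subset_trans (image_subset _ U'U1) _.
  exact: image_omega_preimage (ltnW kn).
apply: subsetI_neq0 _ (@subset_refl _ _) meet2.
exact: image_omega_preimage (ltnW kn).
Qed.

End Mixing.

Theorem mainTheorem5 (R : realType) (X : metricType R)
  (f : nat -> X -> X) (k : nat) :
  compact [set: X] ->
  (forall n : nat, (0 < n)%N -> continuous (f n)) ->
  (forall n : nat, (0 < n)%N -> forall y : X, exists x : X, f n x = y) ->
  (weakly_mixing_k f 0 -> weakly_mixing_k f k) /\
  (top_mixing_k f 0 -> top_mixing_k f k) /\
  (feeble_open f ->
     (weakly_mixing_k f k -> weakly_mixing_k f 0) /\
     (top_mixing_k f k -> top_mixing_k f 0)).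
Proof.
move=> _ f_cont f_surj; split.
  exact/weakly_mixing_k_of_0/metric_hausdorff.
split; first exact: top_mixing_k_of_0.
by move=> fo; split; [exact: weakly_mixing_0_of_k | exact: top_mixing_0_of_k].
Qed.
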